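(* Under the Standing Setup (see context), let $\{x^k\}$ be the sequence generated by Algorithm 1 and let $f^*:=\inf_{x\in B[\bar x,\beta]}f(x)$. Then $\{f(x^k)\}$ converges to $f^*$, and $\{x^k\}$ converges to a point $x^*$ with $f(x^* )=f^*$.
   Context: $B(x,r)$, $B[x,r]$: open and closed Euclidean balls. For $\mu>0$: $e_\mu f(x):=\min_y\{f(y)+\frac{1}{2\mu}\|y-x\|^2\}$ (Moreau envelope), $P_\mu f(x):=\operatorname{argmin}_y\{f(y)+\frac{1}{2\mu}\|y-x\|^2\}$ (proximal operator). $\partial f$: limiting subdifferential. $f$ is $\rho$-weakly convex on $U$ if $f(\alpha x+(1-\alpha)y)\le \alpha f(x)+(1-\alpha)f(y)+\frac{\rho\alpha(1-\alpha)}{2}\|x-y\|^2$ for all $x,y\in U$, $\alpha\in[0,1]$. Standing Fact (cited): if $f$ is $\rho$-weakly convex on $\mathbb{R}^n$, $\rho>0$, $0\in\partial f(\bar x)$ and $\mu\in(0,1/\rho)$, there is $\alpha>0$ such that on $B[\bar x,\alpha]$, $P_\mu f$ is single-valued, $1/(1-\mu\rho)$-Lipschitz, equal to $(I+\mu\partial f)^{-1}$, and $e_\mu f$ is $C^1$ with $\nabla e_\mu f(x)=\mu^{-1}(x-P_\mu f(x))$. Standing Setup: $f:\mathbb{R}^n\to\mathbb{R}\cup\{+\infty\}$ is proper, lower semicontinuous, bounded below and $\rho$-weakly convex on $\mathbb{R}^n$, $\rho>0$; $\bar x\in\operatorname{dom}f$ with $0\in\partial f(\bar x)$. Fix $\bar\lambda>0$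 and bounded sequences $\{\gamma_k\},\{\lambda_k\}$ with $0<\bar\lambda<2\gamma_k<\lambda_k<1/\rho$ for all $k$. Let $\delta>0$ be such that, for every $k$, the Standing Fact holds on $B[\bar x,\delta]$ for $\mu=\gamma_k$ and $\mu=\lambda_k$, and (Assumption 1) the Moreau envelopes $e_{\gamma_k}f$ and $e_{\lambda_k}f$ are convex on $B[\bar x,\delta]$. For each $k$ let $L_k:=1+\frac{\lambda_k-\gamma_k}{\gamma_k}\bigl(1+\frac{1}{1-\gamma_k\rho}\bigr)$, pick $\sigma_k\in(0,2/L_k^2)$, set $\kappa_k:=1-2\sigma_k+\sigma_k^2L_k^2$, and let $\beta>0$ satisfy $\beta<\min\{\delta,\frac{\delta}{\sigma_k}(1-\sqrt{\kappa_k})\}$ for all $k$. Algorithm 1: choose $x^0\in B[\bar x,\beta]$. Given $x^k\in B[\bar x,\beta]$: (a) compute $z^k\in B(\bar x,\delta)$ with $z^k=x^k-(\lambda_k-\gamma_k)\nabla e_{\gamma_k}f(z^k)$; (b) set $x^{k+1}=z^k-\gamma_k(\lambda_k-\gamma_k)^{-1}(x^k-z^k)$. *)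

(* R^n is modelled as 'rV[R]_n with the Euclidean
   norm [enorm] and inner product [dotv] defined below (the library norm on
   'rV is the max norm).  Extended-valued functions are R^n -> \bar R. *)
From HB Require Import structures.
From mathcomp Require Import all_boot all_order all_algebra.
From mathcomp Require Import all_classical all_reals all_analysis.
Set Implicit Arguments.
Unset Strict Implicit.
Unset Printing Implicit Defensive.
Import Order.TTheory GRing.Theory Num.Theory.
Import numFieldNormedType.Exports.
Local Open Scope classical_set_scope.
Local Open Scope ring_scope.

Section Defs.
Variables (R : realType) (n : nat).
Notation vec := 'rV[R]_n.

Definition dotv (u v : vec) : R := \sum_(i < n) u ord0 i * v ord0 i.
Definition enorm (u : vec) : R := Num.sqrt (dotv u u).

Definition oball (x : vec) (r : R) : set vec := [set y | enorm (y - x) < r].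
Definition cball (x : vec) (r : R) : set vec := [set y | enorm (y - x) <= r].

Local Open Scope ereal_scope.

Definition weakly_convex_on (rho : R) (U : set vec) (f : vec -> \bar R) :=
  forall x y (a : R), U x -> U y -> (0 <= a <= 1)%R ->
    f (a *: x + (1 - a) *: y)%R <=
      a%:E * f x + (1 - a)%R%:E * f y
      + (rho * a * (1 - a) / 2 * enorm (x - y) ^+ 2)%R%:E.

Definition convex_on (U : set vec) (f : vec -> \bar R) :=
  weakly_convex_on 0 U f.

Definition proper_fun (f : vec -> \bar R) :=
  (exists x, f x \is a fin_num) /\ (forall x, f x != -oo).

Definition bounded_below (f : vec -> \bar R) :=
  exists m : R, forall x, m%:E <= f x.

Definition moreau (mu : R) (f : vec -> \bar R) (x : vec) : \bar R :=
  ereal_inf [set f y + (enorm (y - x) ^+ 2 / (2 * mu))%R%:E | y in setT].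

Definition is_prox (mu : R) (f : vec -> \bar R) (x p : vec) :=
  forall y, f p + (enorm (p - x) ^+ 2 / (2 * mu))%R%:E
            <= f y + (enorm (y - x) ^+ 2 / (2 * mu))%R%:E.

Definition frechet_subgrad (f : vec -> \bar R) (x v : vec) :=
  f x \is a fin_num /\
  forall eps : R, (0 < eps)%R -> exists2 d : R, (0 < d)%R &
    forall y, (enorm (y - x)%R < d)%R ->
      f x + (dotv v (y - x) - eps * enorm (y - x))%R%:E <= f y.

Definition limiting_subgrad (f : vec -> \bar R) (x v : vec) :=
  exists (xs vs : nat -> vec),
    xs @ \oo --> x /\ vs @ \oo --> v /\ (fun k => f (xs k)) @ \oo --> f x /\
    forall k, frechet_subgrad f (xs k) (vs k).

Definition is_gradient (phi : vec -> \bar R) (x g : vec) :=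
  phi x \is a fin_num /\
  forall eps : R, (0 < eps)%R -> exists2 d : R, (0 < d)%R &
    forall y, (enorm (y - x)%R < d)%R ->
      phi y \is a fin_num /\
      (`| fine (phi y) - fine (phi x) - dotv g (y - x) | <= eps * enorm (y - x))%R.

(* Conclusion of the cited Standing Fact on a set U for parameter mu. *)
Definition standing_fact_on (rho mu : R) (f : vec -> \bar R) (U : set vec) :=
  (forall x, U x -> exists! p, is_prox mu f x p) /\
  (forall x x' p p', U x -> U x' -> is_prox mu f x p -> is_prox mu f x' p' ->
     (enorm (p - p') <= (1 - mu * rho)^-1 * enorm (x - x'))%R) /\
  (* P_mu f = (I + mu df)^{-1} on U *)
  (forall x y, U x -> (is_prox mu f x y <-> limiting_subgrad f y (mu^-1 *: (x - y)))) /\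
  (* e_mu f is C^1 on U with gradient mu^{-1}(x - P_mu f x) (continuity of the
     gradient follows from the Lipschitz property above) *)
  (forall x p, U x -> is_prox mu f x p -> is_gradient (moreau mu f) x (mu^-1 *: (x - p))).

End Defs.

(* Each step of Algorithm 1 is an exact proximal step x^{k+1} = P_{lam_k} f(x^k):
   with p = P_{gam_k} f(z^k), the gradient of e_{gam_k} f at z^k is
   (z^k - p)/gam_k, which also equals (x^k - p)/lam_k, so the resolvent
   characterisations of P_gam and P_lam share this subgradient of f at p.
   Convexity of e_{lam_k} f on B[xbar,delta] makes its tangent plane at x^k a
   minorant, and e_{lam_k} f <= f yields the descent inequality
     f(x^{k+1}) + |x^{k+1}-x^k|^2/(2 lam_k) + <(x^k-x^{k+1})/lam_k, u-x^k> <= f(u)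
   on the ball; the same argument at the stationary point xbar shows that xbar
   minimises f there.  From here it is the classical proximal point analysis:
   f(x^k) decreases to f(xbar) at rate O(1/k), the iterates are Fejer monotone
   with respect to every minimiser in the ball, a cluster point in the compact
   ball B[xbar,beta] is a minimiser by lower semicontinuity, and Fejer
   monotonicity makes it the limit. *)

From HB Require Import structures.
From mathcomp Require Import all_boot all_order all_algebra.
From mathcomp Require Import all_classical all_reals all_analysis.
From mathcomp Require Import ring lra.
Set Implicit Arguments.
Unset Strict Implicit.
Unset Printing Implicit Defensive.
Import Order.TTheory GRing.Theory Num.Theory.
Import numFieldNormedType.Exports.
Local Open Scope classical_set_scope.
Local Open Scope ring_scope.

Section Euclid.
Variables (R : realType) (n : nat).
Implicit Types (u v w : 'rV[R]_n).

Lemma dotvC u v : dotv u v = dotv v u.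
Proof. by apply: eq_bigr => i _; rewrite mulrC. Qed.

Lemma dotvDl u v w : dotv (u + v) w = dotv u w + dotv v w.
Proof. by rewrite /dotv -big_split; apply: eq_bigr => i _; rewrite mxE mulrDl. Qed.

Lemma dotvDr u v w : dotv w (u + v) = dotv w u + dotv w v.
Proof. by rewrite dotvC dotvDl !(dotvC w). Qed.

Lemma dotvZl a u v : dotv (a *: u) v = a * dotv u v.
Proof. by rewrite /dotv mulr_sumr; apply: eq_bigr => i _; rewrite mxE mulrA. Qed.

Lemma dotvZr a u v : dotv v (a *: u) = a * dotv v u.
Proof. by rewrite dotvC dotvZl dotvC. Qed.

Lemma dotvNl u v : dotv (- u) v = - dotv u v.
Proof. by rewrite -scaleN1r dotvZl mulN1r. Qed.

Lemma dotvNr u v : dotv v (- u) = - dotv v u.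
Proof. by rewrite dotvC dotvNl dotvC. Qed.

Lemma dotvBl u v w : dotv (u - v) w = dotv u w - dotv v w.
Proof. by rewrite dotvDl dotvNl. Qed.

Lemma dotv0l u : dotv 0 u = 0.
Proof. by rewrite -(scale0r u) dotvZl mul0r. Qed.

Lemma dotv0r u : dotv u 0 = 0.
Proof. by rewrite dotvC dotv0l. Qed.

Lemma dotv_ge0 u : 0 <= dotv u u.
Proof. by rewrite /dotv sumr_ge0 // => i _; rewrite -expr2 sqr_ge0. Qed.

Lemma dotv_eq0 u : dotv u u = 0 -> u = 0.
Proof.
move=> /eqP; rewrite /dotv psumr_eq0; last by move=> i _; rewrite -expr2 sqr_ge0.
move=> /allP u0; apply/rowP => i; rewrite mxE.
by have := u0 i (mem_index_enum i); rewrite /= -expr2 sqrf_eq0 => /eqP.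
Qed.

Lemma enorm_ge0 u : 0 <= enorm u.
Proof. exact: sqrtr_ge0. Qed.

Lemma enorm_sqr u : enorm u ^+ 2 = dotv u u.
Proof. by rewrite /enorm sqr_sqrtr // dotv_ge0. Qed.

Lemma enorm_eq0 u : enorm u = 0 -> u = 0.
Proof. by move=> u0; apply: dotv_eq0; rewrite -enorm_sqr u0 expr0n. Qed.

Lemma enormZ a u : enorm (a *: u) = `|a| * enorm u.
Proof. by rewrite /enorm dotvZl dotvZr mulrA -expr2 sqrtrM ?sqr_ge0 // sqrtr_sqr. Qed.

Lemma enorm0 : enorm (0 : 'rV[R]_n) = 0.
Proof. by rewrite /enorm dotv0l sqrtr0. Qed.

Lemma enormBC u v : enorm (u - v) = enorm (v - u).
Proof. by rewrite -opprB -scaleN1r enormZ normrN1 mul1r. Qed.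

Lemma enormD_sqr u v :
  enorm (u + v) ^+ 2 = enorm u ^+ 2 + 2 * dotv u v + enorm v ^+ 2.
Proof. by rewrite !enorm_sqr dotvDl !dotvDr (dotvC v u); ring. Qed.

Lemma coord_le_enorm u i : `|u ord0 i| <= enorm u.
Proof.
rewrite -(ler_pXn2r (_ : 0 < 2)%N) ?nnegrE ?enorm_ge0 // enorm_sqr.
rewrite real_normK ?num_real // /dotv (bigD1 i) //= -expr2 lerDl.
by apply: sumr_ge0 => j _; rewrite -expr2 sqr_ge0.
Qed.

Lemma norm_le_enorm u : `|u| <= enorm u.
Proof.
rewrite [leLHS]/Num.norm /= mx_normrE; apply: bigmax_le; first exact: enorm_ge0.
by move=> [i j] _ /=; rewrite (ord1 i); exact: coord_le_enorm.
Qed.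

Lemma enorm_le_norm u : enorm u <= n%:R * `|u|.
Proof.
have coord_le i : `|u ord0 i| <= `|u|.
  by rewrite [leRHS]/Num.norm /= mx_normrE; apply/bigmax_geP; right; exists (ord0, i).
rewrite -(ler_pXn2r (_ : 0 < 2)%N) ?nnegrE ?enorm_ge0 ?mulr_ge0 // enorm_sqr.
apply: (@le_trans _ _ (\sum_(i < n) `|u| ^+ 2)).
  apply: ler_sum => i _; rewrite -expr2 -real_normK ?num_real //.
  by rewrite lerXn2r ?nnegrE.
rewrite sumr_const card_ord exprMn -[leLHS]mulr_natl.
apply: ler_wpM2r; first exact: sqr_ge0.
by rewrite -natrX ler_nat; case: (n) => // m; rewrite expnS leq_pmulr.
Qed.

Lemma dotv_continuous : continuous (fun u => dotv u u).
Proof.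
move=> u; apply: (@cvg_big _ _ +%R 0 predT add_continuous _ (nbhs u)) => i _.
by apply: cvgM; exact: (@coord_continuous R 1 n ord0 i).
Qed.

Lemma enorm_continuous : continuous (@enorm R n).
Proof.
move=> u; apply: (@continuous_comp _ _ _ (fun v => dotv v v) (@Num.sqrt R)).
  exact: dotv_continuous.
exact: sqrt_continuous.
Qed.

Lemma cball_closed (c : 'rV[R]_n) r : closed (cball c r).
Proof.
have -> : cball c r = (fun y => enorm (y - c)) @^-1` [set s | s <= r] by [].
apply: preimage_closed; last exact: closed_le.
move=> y _; apply: (@continuous_comp _ _ _ (fun v => v - c) (@enorm R n)).
  exact: (@cvgB R _ _ (nbhs y) _ id (cst c) y c cvg_id (cvg_cst c)).
exact: enorm_continuous.
Qed.

Lemma cball_compact (c : 'rV[R]_n) r : compact (cball c r).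
Proof.
apply: bounded_closed_compact; last exact: cball_closed.
exists (`|c| + r); split; first exact: num_real.
move=> M hM y /= hy; rewrite -(subrK c y); apply: (le_trans (ler_normD _ _)).
by have := norm_le_enorm (y - c); rewrite /cball /= in hy; lra.
Qed.

Lemma fejer_cluster_cvg (u : nat -> 'rV[R]_n) c :
  (forall k, enorm (u k.+1 - c) <= enorm (u k - c)) ->
  cluster (u @ \oo) c -> u @ \oo --> c.
Proof.
move=> /nonincreasing_seqP fejer clu; apply/cvgrPdist_le => e e0.
have r0 : 0 < e / (n%:R + 1) by rewrite divr_gt0 // ltr_wpDl.
have urange : (u @ \oo) (range u) by exists 0%N => // k _; exists k.
have [_ [[m _ <-] um]] := clu _ _ urange (nbhsx_ballx c _ r0).
move: um; rewrite -ball_normE /ball_ /= => um.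
exists m => // k /= mk; apply: (le_trans (norm_le_enorm _)); rewrite enormBC.
apply: (le_trans (fejer _ _ mk)); rewrite enormBC.
apply: (le_trans (enorm_le_norm _)).
have n0 : (0 : R) <= n%:R := ler0n _ n.
have : n%:R * `|c - u m| <= n%:R * (e / (n%:R + 1)) by apply: ler_wpM2l => //; exact: ltW.
have : n%:R * (e / (n%:R + 1)) <= e by rewrite mulrA ler_pdivrMr; [nra | lra].
lra.
Qed.

End Euclid.

Lemma is_gradient_unique (R : realType) n (phi : 'rV[R]_n -> \bar R) x g1 g2 :
  is_gradient phi x g1 -> is_gradient phi x g2 -> g1 = g2.
Proof.
move=> [_ dg1] [_ dg2]; set h := g1 - g2; set N := enorm h.
have N0 : 0 <= N := enorm_ge0 h.
suff : N <= 0.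
  move=> Nle0; apply/eqP; rewrite -subr_eq0; apply/eqP/enorm_eq0.
  by apply/le_anti; rewrite Nle0 enorm_ge0.
apply/ler_addgt0Pr => e e0; rewrite add0r.
have [d1 d10 near1] := dg1 (e / 2) (divr_gt0 e0 (ltr0Sn _ 1)).
have [d2 d20 near2] := dg2 (e / 2) (divr_gt0 e0 (ltr0Sn _ 1)).
set d := Num.min d1 d2; have d0 : 0 < d by rewrite lt_min d10 d20.
set t := d / (N + 1); have t0 : 0 < t by rewrite divr_gt0 // ltr_wpDl.
have th : x + t *: h - x = t *: h by rewrite addrC addKr.
have tN : enorm (x + t *: h - x) < d.
  by rewrite th enormZ gtr0_norm // -/N /t mulrAC ltr_pdivrMr ?ltr_wpDl //; nra.
have dd1 : d <= d1 by rewrite ge_min lexx.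
have dd2 : d <= d2 by rewrite ge_min lexx orbT.
have [_ b1] := near1 _ (lt_le_trans tN dd1).
have [_ b2] := near2 _ (lt_le_trans tN dd2).
move: b1 b2; rewrite th enormZ (gtr0_norm t0) -/N !ler_norml => /andP[l1 u1] /andP[l2 u2].
have : dotv h (t *: h) <= e * (t * N) by rewrite /h dotvBl; lra.
rewrite dotvZr -enorm_sqr -/N mulrCA => NN; rewrite leNgt; apply/negP => eN.
have tN0 : 0 < t * N by apply: mulr_gt0 => //; lra.
by move: NN; rewrite ler_pM2r // leNgt eN.
Qed.

Lemma lsc_cluster_le (T : topologicalType) (R : realType) (f : T -> \bar R)
    (u : nat -> T) (a : nat -> R) (l : R) c :
  lower_semicontinuous f -> cluster (u @ \oo) c ->
  (forall k, (f (u k) <= (a k)%:E)%E) -> a @ \oo --> l -> (f c <= l%:E)%E.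
Proof.
move=> f_lsc clu fa al; apply/lee_addgt0Pr => e e0.
rewrite -EFinD leNgt; apply/negP => /f_lsc[V cV Vf].
have ev : (u @ \oo) (u @` [set k | a k < l + e]).
  have lle : l < l + e by rewrite ltrDl.
  by apply: filterS (cvgr_lt _ al _ lle) => k ak; exists k.
have [_ [[k ak <-] /Vf fk]] := clu _ _ ev cV.
by have := lt_le_trans fk (fa k); rewrite lte_fin; move: ak => /=; lra.
Qed.

Section MoreauEnvelope.
Variables (R : realType) (n : nat).
Implicit Types (f phi : 'rV[R]_n -> \bar R) (U : set 'rV[R]_n).

Lemma moreau_prox mu f x p : is_prox mu f x p ->
  moreau mu f x = (f p + (enorm (p - x) ^+ 2 / (2 * mu))%:E)%E.
Proof.
move=> px; apply/le_anti/andP; split.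
  by apply: ereal_inf_lbound; exists p.
by apply/ereal_infP => _ [y _ <-]; exact: px.
Qed.

Lemma moreau_le mu f u : (moreau mu f u <= f u)%E.
Proof.
apply: ereal_inf_lbound; exists u => //.
by rewrite subrr enorm0 expr0n /= mul0r adde0.
Qed.

Lemma convex_gradient_le phi U x u g :
  convex_on U phi -> U x -> U u -> is_gradient phi x g ->
  (phi x + (dotv g (u - x))%:E <= phi u)%E.
Proof.
move=> cvx Ux Uu [phix_fin dphi].
set E := fine (phi x); set D := dotv g (u - x); set en := enorm (u - x).
have phixE : phi x = E%:E by rewrite fineK.
have en0 : 0 <= en := enorm_ge0 _.
pose w t := t *: u + (1 - t) *: x.
have wB t : w t - x = t *: (u - x) by apply/rowP => i; rewrite !mxE; ring.
have chord t : 0 < t <= 1 -> (phi (w t) <= t%:E * phi u + (1 - t)%:E * E%:E)%E.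
  move=> /andP[t0 t1]; rewrite -phixE.
  by have := cvx u x t Uu Ux; rewrite !mul0r adde0; apply; rewrite ltW.
have tangent eps : 0 < eps -> exists t, [/\ 0 < t <= 1,
    phi (w t) \is a fin_num & E + t * (D - eps * en) <= fine (phi (w t))].
  move=> eps0; have [d d0 near_x] := dphi _ eps0.
  set t := Num.min 1 (d / (en + 1)).
  have t0 : 0 < t by rewrite lt_min ltr01 divr_gt0 // ltr_wpDl.
  have td : t <= d / (en + 1) by rewrite ge_min lexx orbT.
  have ten : t * en < d.
    apply: le_lt_trans (ler_wpM2r en0 td) _.
    by rewrite mulrAC ltr_pdivrMr ?ltr_wpDl //; nra.
  have wt_near : enorm (w t - x) < d by rewrite wB enormZ (gtr0_norm t0).
  have [fin_w] := near_x _ wt_near.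
  rewrite wB enormZ (gtr0_norm t0) dotvZr ler_norml => /andP[lb _].
  exists t; split => //; first by rewrite t0 ge_min lexx.
  by rewrite -/en -/D -/E in lb; lra.
case phiu : (phi u) => [r| |]; first last.
- have [t [t01 fin_w _]] := tangent _ ltr01.
  have := chord t t01; rewrite phiu mulrNy gtr0_sg; last by case/andP: t01.
  by rewrite mul1e addNye leeNy_eq => /eqP wNy; rewrite wNy in fin_w.
- by rewrite leey.
rewrite phixE -EFinD lee_fin.
have slope eps : 0 < eps -> D - eps * en <= r - E.
  move=> eps0; have [t [/andP[t0 t1] fin_w lb]] := tangent _ eps0.
  have := chord t; rewrite t0 t1 phiu -(fineK fin_w) -!EFinM -EFinD lee_fin => /(_ isT) ub.
  by rewrite -(ler_pM2l t0); lra.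
apply/ler_addgt0Pr => e e0.
have := slope (e / (en + 1)) (divr_gt0 e0 (ltr_wpDl en0 ltr01)).
have : e / (en + 1) * en <= e by rewrite mulrAC ler_pdivrMr ?ltr_wpDl //; nra.
lra.
Qed.

Lemma prox_descent mu f U x p u :
  convex_on U (moreau mu f) -> U x -> U u -> is_prox mu f x p ->
  is_gradient (moreau mu f) x (mu^-1 *: (x - p)) ->
  (f p + (enorm (p - x) ^+ 2 / (2 * mu) + dotv (mu^-1 *: (x - p)) (u - x))%:E
    <= f u)%E.
Proof.
move=> cvx Ux Uu px dx; rewrite EFinD addeA -moreau_prox //.
exact: le_trans (convex_gradient_le cvx Ux Uu dx) (moreau_le _ _ _).
Qed.

End MoreauEnvelope.

Section StandingFact.
Variables (R : realType) (n : nat) (rho : R) (f : 'rV[R]_n -> \bar R).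
Variable U : set 'rV[R]_n.

Lemma extrapolated_step_prox gam lam x z g :
  0 < gam < lam ->
  standing_fact_on rho gam f U -> standing_fact_on rho lam f U ->
  U x -> U z -> is_gradient (moreau gam f) z g -> z = x - (lam - gam) *: g ->
  is_prox lam f x (z - (gam / (lam - gam)) *: (x - z)).
Proof.
move=> /andP[gam0 gamlam] [prox_uniq [_ [gam_subgrad gam_grad]]].
move=> [_ [_ [lam_subgrad _]]] Ux Uz dz zE.
have [p [pz _]] := prox_uniq z Uz.
have gE : g = gam^-1 *: (z - p) := is_gradient_unique dz (gam_grad z p Uz pz).
have lg0 : lam - gam != 0 by rewrite subr_eq0 gt_eqF.
have xz : x - z = (lam - gam) *: g by rewrite zE subKr.
have gamg : gam *: g = z - p by rewrite gE scalerA divff ?gt_eqF // scale1r.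
have -> : z - (gam / (lam - gam)) *: (x - z) = p.
  by rewrite xz scalerA mulfVK // gamg subKr.
apply/(lam_subgrad _ _ Ux).
have -> : lam^-1 *: (x - p) = g.
  rewrite -(subrKA z) xz -gamg -scalerDl subrK scalerA mulVf ?scale1r //.
  by rewrite gt_eqF // (lt_trans gam0).
by rewrite gE; exact/(gam_subgrad _ _ Uz).
Qed.

Lemma stationary_minimizes_on mu c u :
  standing_fact_on rho mu f U -> convex_on U (moreau mu f) -> U c ->
  limiting_subgrad f c 0 -> U u -> (f c <= f u)%E.
Proof.
move=> [_ [_ [subgrad grad]]] cvx Uc c0 Uu.
have pc : is_prox mu f c c by apply/(subgrad _ _ Uc); rewrite subrr scaler0.
have := prox_descent cvx Uc Uu pc (grad _ _ Uc pc).
by rewrite subrr scaler0 dotv0l enorm0 expr0n /= mul0r addr0 adde0.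
Qed.

End StandingFact.

Section ProximalPoint.
Variables (R : realType) (n : nat) (f : 'rV[R]_n -> \bar R).
Variables (U K : set 'rV[R]_n) (lam : nat -> R) (lambar : R).
Variables (x : nat -> 'rV[R]_n) (c : 'rV[R]_n).
Hypothesis f_lsc : lower_semicontinuous f.
Hypothesis f_neqNy : forall v, f v != -oo%E.
Hypothesis K_compact : compact K.
Hypothesis KU : K `<=` U.
Hypothesis xK : forall k, K (x k).
Hypothesis lambar_gt0 : 0 < lambar.
Hypothesis lambar_le : forall k, lambar <= 2 * lam k.
Hypothesis Uc : U c.
Hypothesis fc_fin : f c \is a fin_num.
Hypothesis c_min : forall u, U u -> (f c <= f u)%E.
Hypothesis descent : forall k u, U u ->
  (f (x k.+1) + (enorm (x k.+1 - x k) ^+ 2 / (2 * lam k)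
     + dotv ((lam k)^-1 *: (x k - x k.+1)) (u - x k))%:E <= f u)%E.

Let fmin := fine (f c).
Let val k := fine (f (x k.+1)).

Let lam_gt0 k : 0 < lam k.
Proof. by have := lambar_le k; have := lambar_gt0; lra. Qed.

Let fminE : f c = fmin%:E.
Proof. by rewrite fineK. Qed.

Lemma value_iterateE k : f (x k.+1) = (val k)%:E.
Proof.
rewrite fineK //; have := descent k Uc; move: fc_fin (f_neqNy (x k.+1)).
by case: (f (x k.+1)) => [r| |] //; case: (f c).
Qed.

Lemma value_iterate_ge k : fmin <= val k.
Proof. by rewrite -lee_fin -fminE -value_iterateE; apply/c_min/KU. Qed.

Lemma value_iterate_nonincreasing k : val k.+1 <= val k.
Proof.
have := descent k.+1 (KU (xK k.+1)).
rewrite subrr dotv0r addr0 !value_iterateE -EFinD lee_fin.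
have : 0 <= enorm (x k.+2 - x k.+1) ^+ 2 / (2 * lam k.+1).
  by rewrite divr_ge0 ?sqr_ge0 // mulr_ge0 // ltW.
lra.
Qed.

Lemma iterate_fejer_sqr k u : U u -> f u = f c ->
  2 * lam k * (val k - fmin) + enorm (x k.+1 - u) ^+ 2 <= enorm (x k - u) ^+ 2.
Proof.
move=> Uu fu; have := descent k Uu; rewrite value_iterateE fu fminE.
rewrite -EFinD lee_fin -(opprB (x k.+1)) -(opprB (x k) u).
rewrite dotvZl dotvNl dotvNr opprK dotvC.
have -> : x k.+1 - u = (x k - u) + (x k.+1 - x k) by rewrite [RHS]addrC subrKA.
set a := x k - u; set b := x k.+1 - x k; rewrite (enormD_sqr a b).
have two_lam : 2 * lam k * (enorm b ^+ 2 / (2 * lam k) + (lam k)^-1 * dotv a b) =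
    enorm b ^+ 2 + 2 * dotv a b.
  by field; rewrite gt_eqF.
have := lam_gt0 k; nra.
Qed.

Lemma iterate_fejer k u : U u -> f u = f c ->
  enorm (x k.+1 - u) <= enorm (x k - u).
Proof.
move=> Uu fu; rewrite -(ler_pXn2r (_ : 0 < 2)%N) ?nnegrE ?enorm_ge0 //.
have := iterate_fejer_sqr k Uu fu; have := value_iterate_ge k.
have := lam_gt0 k; nra.
Qed.

Lemma value_gap_sum N :
  lambar * N.+1%:R * (val N - fmin) <=
    enorm (x 0 - c) ^+ 2 - enorm (x N.+1 - c) ^+ 2.
Proof.
have step k : lambar * (val k - fmin) + enorm (x k.+1 - c) ^+ 2 <= enorm (x k - c) ^+ 2.
  have := iterate_fejer_sqr k Uc erefl; have := value_iterate_ge k.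
  have := lambar_le k; nra.
elim: N => [|N IH]; first by have := step 0%N; rewrite mulr1; lra.
have mono : lambar * N.+1%:R * (val N.+1 - fmin) <= lambar * N.+1%:R * (val N - fmin).
  apply: ler_wpM2l; first by rewrite mulr_ge0 ?ler0n ?ltW.
  by have := value_iterate_nonincreasing N; lra.
have := step N.+1; rewrite -[N.+2]addn1 natrD; lra.
Qed.

Lemma value_gap_le N :
  val N - fmin <= enorm (x 0 - c) ^+ 2 / lambar * harmonic N.
Proof.
have Nlam : 0 < lambar * N.+1%:R by rewrite mulr_gt0.
rewrite /harmonic /= -mulrA -invfM ler_pdivlMr // mulrC.
have := value_gap_sum N; have := sqr_ge0 (enorm (x N.+1 - c)); lra.
Qed.

Lemma value_iterate_cvg : val @ \oo --> fmin.
Proof.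
set C := enorm (x 0 - c) ^+ 2 / lambar.
have upper : (fun N => fmin + C * harmonic N) @ \oo --> fmin + C * 0.
  exact: cvgD (cvg_cst _) (cvgM (cvg_cst _) cvg_harmonic).
rewrite mulr0 addr0 in upper.
apply: (squeeze_cvgr _ (cvg_cst fmin) upper); apply: nearW => N.
by rewrite value_iterate_ge /= -lerBlDl value_gap_le.
Qed.

Lemma proximal_point_value_cvg : (fun k => f (x k)) @ \oo --> f c.
Proof.
rewrite -cvg_shiftS fminE /=; under eq_fun do rewrite value_iterateE.
by apply: cvg_EFin; [exact: nearW | exact: value_iterate_cvg].
Qed.

Lemma proximal_point_cvg : exists xs, x @ \oo --> xs /\ f xs = f c.
Proof.
pose y k := x k.+1.
have [xs [Kxs clu]] : K `&` cluster (y @ \oo) !=set0.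
  by apply: K_compact; exists 0%N => // k _; exact: xK.
have fxs : f xs = f c.
  apply/le_anti; rewrite c_min ?andbT; last exact: KU.
  rewrite fminE; apply: lsc_cluster_le f_lsc clu _ value_iterate_cvg.
  by move=> k; rewrite value_iterateE.
exists xs; split => //; rewrite -cvg_shiftS.
by apply: fejer_cluster_cvg clu => k; exact: iterate_fejer (KU Kxs) fxs.
Qed.

End ProximalPoint.

Theorem theorem4p5 (R : realType) (n : nat) (f : 'rV[R]_n -> \bar R)
  (rho : R) (xbar : 'rV[R]_n) (lambar : R) (gam lam : nat -> R)
  (delta : R) (sigma : nat -> R) (beta : R)
  (x z : nat -> 'rV[R]_n) :
  proper_fun f -> lower_semicontinuous f -> bounded_below f ->
  0 < rho -> weakly_convex_on rho setT f ->
  f xbar \is a fin_num -> limiting_subgrad f xbar 0 ->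
  0 < lambar ->
  (exists M : R, forall k, `|gam k| <= M /\ `|lam k| <= M) ->
  (forall k, lambar < 2 * gam k /\ 2 * gam k < lam k /\ lam k < rho^-1) ->
  0 < delta ->
  (forall k, standing_fact_on rho (gam k) f (cball xbar delta) /\
             standing_fact_on rho (lam k) f (cball xbar delta)) ->
  (forall k, convex_on (cball xbar delta) (moreau (gam k) f) /\
             convex_on (cball xbar delta) (moreau (lam k) f)) ->
  (let L k := 1 + (lam k - gam k) / gam k * (1 + (1 - gam k * rho)^-1) in
   let kappa k := 1 - 2 * sigma k + sigma k ^+ 2 * L k ^+ 2 in
   (forall k, 0 < sigma k < 2 / L k ^+ 2) /\
   0 < beta /\
   (forall k, beta < Num.min delta (delta / sigma k * (1 - Num.sqrt (kappa k))))) ->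
  (forall k, cball xbar beta (x k)) ->
  (forall k, oball xbar delta (z k) /\
     exists g, is_gradient (moreau (gam k) f) (z k) g /\
               z k = x k - (lam k - gam k) *: g) ->
  (forall k, x k.+1 = z k - (gam k / (lam k - gam k)) *: (x k - z k)) ->
  let fstar := ereal_inf [set f y | y in cball xbar beta] in
  (fun k => f (x k)) @ \oo --> fstar /\
  exists xstar, x @ \oo --> xstar /\ f xstar = fstar.
Proof.
move=> [_ f_neqNy] f_lsc _ _ _ fxbar_fin xbar_stat lambar_gt0 _ steps _ standing.
move=> convex [_ [beta_gt0 beta_lt]] x_ball z_step x_next fstar.
have gam_lam k : 0 < gam k < lam k by have [? [? _]] := steps k; apply/andP; lra.
have ball_sub : cball xbar beta `<=` cball xbar delta.
  move=> y; have := beta_lt 0%N; rewrite lt_min /cball /= => /andP[? _]; lra.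
have Ux k := ball_sub _ (x_ball k).
have xbar_in : cball xbar beta xbar by rewrite /cball /= subrr enorm0 ltW.
have prox k : is_prox (lam k) f (x k) (x k.+1).
  have [z_in [g [dg zE]]] := z_step k; rewrite x_next.
  exact: extrapolated_step_prox (gam_lam k) (standing k).1 (standing k).2
    (Ux k) (ltW z_in) dg zE.
have xbar_min u : cball xbar delta u -> (f xbar <= f u)%E.
  exact: stationary_minimizes_on (standing 0%N).2 (convex 0%N).2
    (ball_sub _ xbar_in) xbar_stat.
have descent k u (Uu : cball xbar delta u) := prox_descent (convex k).2 (Ux k) Uu
  (prox k) ((standing k).2.2.2.2 _ _ (Ux k) (prox k)).
have lambar_le k : lambar <= 2 * lam k by have [? [? _]] := steps k; lra.
have fstarE : fstar = f xbar.
  apply/le_anti/andP; split; first by apply: ereal_inf_lbound; exists xbar.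
  by apply/ereal_infP => _ [y /ball_sub y_in <-]; exact: xbar_min.
rewrite fstarE; split.
  exact: proximal_point_value_cvg f_neqNy ball_sub x_ball lambar_gt0 lambar_le
    (ball_sub _ xbar_in) fxbar_fin xbar_min descent.
exact: proximal_point_cvg f_lsc f_neqNy (@cball_compact _ _ xbar beta) ball_sub x_ball
  lambar_gt0 lambar_le (ball_sub _ xbar_in) fxbar_fin xbar_min descent.
Qed.
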